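(* Let $G$ be a two-sided bipartite $\epsilon$-expander with bipartition $A,B$ and maximum degree $\Delta$, and let $n:=|A|=|B|$ with $n\geq 3$. Let $k\geq 2$ be an integer, and for each vertex $v$ of $G$ let $k_v$ be an integer with $k\leq k_v\leq(1+\frac{\epsilon}{4})k$. Let $G'$ be a bipartite graph with bipartition $X,Y$ such that: (i) $G'$ contains pairwise disjoint cycles $\{C_v: v\in V(G)\}$; (ii) $|C_v|=2k_v$ for each $v\in V(G)$; (iii) $V(G')=\bigcup_{v\in V(G)}V(C_v)$; (iv) for each edge $vw$ of $G$ there are edges $xy$ and $pq$ of $G'$ with $x\in V(C_v)\cap X$, $y\in V(C_w)\cap Y$, $p\in V(C_v)\cap Y$ and $q\in V(C_w)\cap X$. Then $G'$ is a two-sided bipartite $\epsilon'$-expander for some $\epsilon'>0$ depending only on $\epsilon$, $k$ and $\Delta$.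
   Context: For $\epsilon\in(0,1]$, a bipartite graph $G$ with bipartition $A,B$ is a two-sided bipartite $\epsilon$-expander if $|A|=|B|$, $|N(S)|\geq(1+\epsilon)|S|$ for every $S\subset A$ with $|S|\leq|A|/2$, and $|N(T)|\geq(1+\epsilon)|T|$ for every $T\subset B$ with $|T|\leq|B|/2$; here $N(S)$ is the set of vertices adjacent to some vertex of $S$. *)

From HB Require Import structures.
From mathcomp Require Import all_boot all_order all_algebra.
From mathcomp Require Import reals.
Set Implicit Arguments. Unset Strict Implicit. Unset Printing Implicit Defensive.
Import Order.TTheory GRing.Theory Num.Theory.
Local Open Scope ring_scope.

Definition simple_graph (T : finType) (e : rel T) : Prop :=
  symmetric e /\ irreflexive e.

Definition nbhd (T : finType) (e : rel T) (S : {set T}) : {set T} :=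
  [set y | [exists x in S, e x y]].

Definition deg (T : finType) (e : rel T) (v : T) : nat := #|[set w | e v w]|.

Definition max_deg (T : finType) (e : rel T) : nat := (\max_(v : T) deg e v)%N.

Definition bipartite_with (T : finType) (e : rel T) (A B : {set T}) : Prop :=
  [/\ simple_graph e, A :&: B = set0, A :|: B = setT &
      forall x y, e x y -> (x \in A /\ y \in B) \/ (x \in B /\ y \in A)].

(* Two-sided bipartite eps-expander (eps in (0,1] is a hypothesis of the
   definition in the paper; we include it). *)
Definition two_sided_expander (R : realType) (eps : R)
    (T : finType) (e : rel T) (A B : {set T}) : Prop :=
  [/\ 0 < eps <= 1, bipartite_with e A B, #|A| = #|B|,
      (forall S : {set T}, S \subset A -> (2 * #|S| <= #|A|)%N ->
          (1 + eps) * #|S|%:R <= #|nbhd e S|%:R) &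
      (forall S : {set T}, S \subset B -> (2 * #|S| <= #|B|)%N ->
          (1 + eps) * #|S|%:R <= #|nbhd e S|%:R)].

Definition is_cycle_in (T : finType) (e : rel T) (c : seq T) : Prop :=
  [/\ uniq c, (3 <= size c)%N & cycle e c].

From HB Require Import structures.
From mathcomp Require Import all_boot all_order all_algebra zify ring lra.
From mathcomp Require Import reals.
Import Order.TTheory GRing.Theory Num.Theory.
Set Implicit Arguments. Unset Strict Implicit. Unset Printing Implicit Defensive.

(* An even cycle alternating between X and Y expands weakly: a set S of its
   X-vertices has at least |S| neighbours on the cycle (the successors of S), and
   strictly more unless S is empty or the whole X-side, since otherwise successors
   and predecessors of S coincide and S is closed under two steps along the cycle.
   Given S in X with 2|S| <= |X|, call C_v full if S contains its whole X-side and
   partial if S meets it properly. Each partial cycle, and by (iv) each non-full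
   cycle adjacent in G to a full one, yields an extra neighbour of S. Full cycles
   number at most 5|A|/4, so the expansion of G provides (eps/8) |full| such
   neighbouring cycles; as |S| <= (1 + eps/4) k (|full| + |partial|), S gains at
   least eps/(32k) |S| neighbours. *)

Lemma nbhdP (T : finType) (e : rel T) (S : {set T}) y :
  reflect (exists2 x, x \in S & e x y) (y \in nbhd e S).
Proof. by rewrite inE; apply: (iffP exists_inP). Qed.

Lemma nbhdS (T : finType) (e : rel T) (S1 S2 : {set T}) :
  S1 \subset S2 -> nbhd e S1 \subset nbhd e S2.
Proof.
move=> sS12; apply/subsetP => y /nbhdP[x xS1 exy].
by apply/nbhdP; exists x; first exact: (subsetP sS12).
Qed.

Section Bipartite.

Variables (T : finType) (e : rel T) (A B : {set T}).
Hypothesis bipAB : bipartite_with e A B.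

Lemma bipartite_withC : bipartite_with e B A.
Proof.
case: bipAB => simple_e AB0 ABT sides; split; rewrite 1?setIC 1?setUC //.
by move=> x y /sides[] [? ?]; [right | left].
Qed.

Lemma bipartite_symmetric : symmetric e.
Proof. by case: bipAB => -[]. Qed.

Lemma in_bipartite_B x : (x \in B) = (x \notin A).
Proof.
case: bipAB => _ AB0 ABT _.
have := congr1 (fun D : {set T} => x \in D) AB0.
have := congr1 (fun D : {set T} => x \in D) ABT.
by rewrite !inE; case: (x \in A); case: (x \in B).
Qed.

Lemma bipartite_edge_flip x y : e x y -> (y \in A) = (x \notin A).
Proof.
move=> exy; have [_ _ _ /(_ x y exy)] := bipAB.
by rewrite !in_bipartite_B => -[[-> /negbTE ->] | [/negbTE -> ->]].
Qed.

Lemma nbhd_subset_B (S : {set T}) : S \subset A -> nbhd e S \subset B.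
Proof.
move=> sSA; apply/subsetP => y /nbhdP[x xS exy].
by rewrite in_bipartite_B (bipartite_edge_flip exy) (subsetP sSA x xS).
Qed.

End Bipartite.

Section EvenCycle.

Variables (W : finType) (e : rel W) (X Y : {set W}) (c : seq W).
Hypotheses (bipXY : bipartite_with e X Y) (uniq_c : uniq c) (cycle_c : cycle e c).

Let next_inj : injective (next c) := can_inj (prev_next uniq_c).

Lemma next_flip x : x \in c -> (next c x \in X) = (x \notin X).
Proof. by move=> xc; rewrite (bipartite_edge_flip bipXY (next_cycle cycle_c xc)). Qed.

Lemma card_cycle_side : (2 * #|[set x in X | x \in c]|)%N = size c.
Proof.
have next_into (D D' : {set W}) :
    {in D, forall x, next c x \in D'} -> (#|D| <= #|D'|)%N.
  move=> DD'; rewrite -(card_imset _ next_inj); apply/subset_leq_card.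
  by apply/subsetP => _ /imsetP[x xD ->]; exact: DD'.
set Dc := [set x in c].
have le1 : (#|Dc :&: X| <= #|Dc :\: X|)%N.
  by apply: next_into => x; rewrite !inE => /andP[xc xX]; rewrite mem_next xc next_flip ?xX.
have le2 : (#|Dc :\: X| <= #|Dc :&: X|)%N.
  by apply: next_into => x; rewrite !inE => /andP[xX xc]; rewrite mem_next xc next_flip.
have -> : [set x in X | x \in c] = Dc :&: X by apply/setP => x; rewrite !inE andbC.
have sizeE : #|Dc| = size c by rewrite cardsE (card_uniqP uniq_c).
have := cardsID X Dc; rewrite sizeE; lia.
Qed.

Let image_into_nbhd (S : {set W}) (f : W -> W) :
  {in S, forall x, e x (f x) /\ f x \in c} ->
  f @: S \subset [set y in nbhd e S | y \in c].
Proof.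
move=> fS; apply/subsetP => _ /imsetP[x xS ->]; have [exf fxc] := fS x xS.
by rewrite inE fxc andbT; apply/nbhdP; exists x.
Qed.

Lemma cycle_nbhd_ge (S : {set W}) :
  S \subset c -> (#|S| <= #|[set y in nbhd e S | y \in c]|)%N.
Proof.
move=> sSc; rewrite -(card_imset _ next_inj); apply/subset_leq_card.
apply: image_into_nbhd => x /(subsetP sSc) xc.
by rewrite next_cycle // mem_next.
Qed.

Lemma cycle_side_closed (S : {set W}) x0 :
  x0 \in S -> S \subset [set x in X | x \in c] ->
  {in S, forall x, next c (next c x) \in S} ->
  [set x in X | x \in c] \subset S.
Proof.
move=> x0S sSXc closedS; have := subsetP sSXc x0 x0S; rewrite inE => /andP[x0X x0c].
have iter_side j : (iter j (next c) x0 \in c) && ((iter j (next c) x0 \in X) == ~~ odd j).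
  elim: j => [|j /andP[jc /eqP jX]] /=; first by rewrite x0c x0X.
  by rewrite mem_next jc next_flip // jX negbK eqxx.
have iter_even j : iter (2 * j) (next c) x0 \in S.
  by elim: j => [|j IHj] //; rewrite mulnS; apply: closedS.
apply/subsetP => y; rewrite inE => /andP[yX yc].
have [i {yc}Ey] : exists i, y = iter i (next c) x0.
  exists (findex (next c) x0 y).
  by rewrite iter_findex // (fconnect_cycle (cycle_next uniq_c) x0c).
have /andP[_ /eqP iX] := iter_side i; rewrite Ey iX in yX *.
by rewrite -(odd_double_half i) (negbTE yX) add0n -mul2n iter_even.
Qed.

Lemma cycle_nbhd_gt (S : {set W}) :
    S \subset [set x in X | x \in c] -> S != set0 ->
    (#|S| < #|[set x in X | x \in c]|)%N ->
  (#|S| < #|[set y in nbhd e S | y \in c]|)%N.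
Proof.
move=> sSXc /set0Pn[x0 x0S] ltS; rewrite ltnNge; apply/negP => leN.
have sSc : S \subset c.
  by apply/subsetP => x /(subsetP sSXc); rewrite inE => /andP[].
have image_nbhd f : injective f -> {in S, forall x, e x (f x) /\ f x \in c} ->
    f @: S = [set y in nbhd e S | y \in c].
  move=> f_inj fS; apply/eqP; rewrite eqEcard image_into_nbhd //.
  by rewrite card_imset.
have nextS : next c @: S = [set y in nbhd e S | y \in c].
  by apply: image_nbhd => // x /(subsetP sSc) xc; rewrite next_cycle // mem_next.
have prevS : prev c @: S = [set y in nbhd e S | y \in c].
  apply: image_nbhd => [|x /(subsetP sSc) xc]; first exact: can_inj (next_prev uniq_c).
  by rewrite (bipartite_symmetric bipXY) prev_cycle // mem_prev.
(* As next and prev map S onto the same set, S is closed under two steps along c. *)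
have closedS : {in S, forall x, next c (next c x) \in S}.
  move=> x xS; have : next c x \in prev c @: S by rewrite prevS -nextS imset_f.
  by case/imsetP => y yS ->; rewrite next_prev.
by have := subset_leq_card (cycle_side_closed x0S sSXc closedS); rewrite leqNgt ltS.
Qed.

End EvenCycle.

Section Expansion.

Variables (R : realType) (eps : R) (V : finType) (e : rel V).
Local Open Scope ring_scope.

Lemma two_sided_expanderC (A B : {set V}) :
  two_sided_expander eps e A B -> two_sided_expander eps e B A.
Proof. by case=> ? /bipartite_withC ? ? ? ?; split. Qed.

Lemma expander_majority (A B U : {set V}) :
  two_sided_expander eps e A B -> (2 <= #|A|)%N -> U \subset A ->
  (#|A| < 2 * #|U|)%N -> (#|A| < 2 * #|nbhd e U|)%N.
Proof.
case=> /andP[eps_gt0 _] _ _ expA _ A_ge2 sUA ltU.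
have /card_geqP[s [uniq_s size_s sU]] : (#|A|./2 <= #|U|)%N by lia.
pose U' := [set x in s].
have cardU' : #|U'| = #|A|./2 by rewrite cardsE (card_uniqP uniq_s).
have sU'U : U' \subset U by apply/subsetP => x; rewrite inE => /sU.
have ltU' : (#|U'| < #|nbhd e U'|)%N.
  rewrite -(ltr_nat R); apply: lt_le_trans (expA U' (subset_trans sU'U sUA) _).
    by rewrite mulrDl mul1r ltrDl mulr_gt0 // ltr0n cardU'; lia.
  by rewrite cardU'; lia.
by have := subset_leq_card (nbhdS e sU'U); lia.
Qed.

Definition expansion_bound (n a N : R) : Prop :=
  (2 * a <= n -> a + eps * a <= N) /\ (n < 2 * a -> a + eps / 2 * (n - a) <= N).

Lemma expander_large_gain (A B F : {set V}) :
  two_sided_expander eps e A B -> (2 <= #|A|)%N -> F \subset A ->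
  (#|A| < 2 * #|F|)%N ->
  #|F|%:R + eps / 2 * (#|A|%:R - #|F|%:R) <= #|nbhd e F|%:R.
Proof.
move=> expAB A_ge2 sFA ltF; have expBA := two_sided_expanderC expAB.
have [/andP[eps_gt0 eps_le1] bipAB cardAB _ expB] := expAB.
set U := B :\: nbhd e F.
have sNUA : nbhd e U \subset A :\: F.
  have sNU : nbhd e U \subset A := nbhd_subset_B (bipartite_withC bipAB) (subsetDl _ _).
  apply/subsetP => z zNU; rewrite inE (subsetP sNU z zNU) andbT.
  apply/negP => zF; case/nbhdP: zNU => u; rewrite inE => /andP[uNF _] euz.
  by move/negP: uNF; apply; apply/nbhdP; exists z; rewrite // (bipartite_symmetric bipAB).
have cardNU : (#|nbhd e U| + #|F| <= #|A|)%N.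
  have := subset_leq_card sNUA; rewrite cardsD (setIidPr sFA).
  have := subset_leq_card sFA; lia.
have cardU : (#|B| <= #|U| + #|nbhd e F|)%N.
  by have := subset_leq_card (subsetIr B (nbhd e F)); rewrite cardsD; lia.
(* U is small because its neighbourhood misses the majority F of A. *)
have U_half : (2 * #|U| <= #|B|)%N.
  rewrite leqNgt; apply/negP => ltU.
  have B_ge2 : (2 <= #|B|)%N by rewrite -cardAB.
  by have := expander_majority expBA B_ge2 (subsetDl _ _) ltU; rewrite -/U; lia.
have expU := expB U (subsetDl _ _) U_half.
have cardNU_R : #|nbhd e U|%:R + #|F|%:R <= #|A|%:R :> R by rewrite -natrD ler_nat.
have cardU_R : #|A|%:R <= #|U|%:R + #|nbhd e F|%:R :> R by rewrite -natrD ler_nat cardAB.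
have ltF_R : #|A|%:R < 2 * #|F|%:R :> R by rewrite -natrM ltr_nat.
have missed : (1 + eps) * (#|A|%:R - #|nbhd e F|%:R) <= #|A|%:R - #|F|%:R.
  apply: le_trans (_ : (1 + eps) * #|U|%:R <= _); last by lra.
  by apply: ler_wpM2l; lra.
have slack : 0 <= (1 - eps) * (#|A|%:R - #|F|%:R).
  by apply: mulr_ge0; rewrite subr_ge0 // ler_nat subset_leq_card.
have [missed_le0 | missed_gt0] := lerP (#|A|%:R - #|nbhd e F|%:R) (0 : R); first by nra.
have : 0 <= eps * (1 - eps) * (#|A|%:R - #|nbhd e F|%:R).
  by apply: mulr_ge0; [apply: mulr_ge0 |]; lra.
nra.
Qed.

Lemma expander_side_bound (A B F : {set V}) :
  two_sided_expander eps e A B -> (2 <= #|A|)%N -> F \subset A ->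
  expansion_bound #|A|%:R #|F|%:R #|nbhd e F|%:R.
Proof.
move=> expAB A_ge2 sFA; split => [half | large].
  have [_ _ _ expA _] := expAB; rewrite -[X in X + _]mul1r -mulrDl.
  by apply: expA; rewrite // -(ler_nat R) natrM.
by apply: (expander_large_gain expAB); rewrite // -(ltr_nat R) natrM.
Qed.

Lemma expansion_bound_two_sides (a b n NA NB d1 d2 : R) :
  0 < eps <= 1 -> 0 <= a <= n -> 0 <= b <= n -> 4 * (a + b) <= 5 * n ->
  expansion_bound n a NA -> expansion_bound n b NB ->
  0 <= d1 -> NA - b <= d1 -> 0 <= d2 -> NB - a <= d2 ->
  eps / 8 * (a + b) <= d1 + d2.
Proof.
move=> /andP[? ?] /andP[? ?] /andP[? ?] ? [smallA largeA] [smallB largeB] *.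
case: (lerP (2 * a) n) => [/smallA | /largeA] ?; case: (lerP (2 * b) n) => [/smallB | /largeB] ?.
- by nra.
- by case: (lerP a (7 * b)) => ?; nra.
- by case: (lerP b (7 * a)) => ?; nra.
- by nra.
Qed.

Lemma expander_gain (A B F : {set V}) :
  two_sided_expander eps e A B -> (2 <= #|A|)%N -> (4 * #|F| <= 5 * #|A|)%N ->
  eps / 8 * #|F|%:R <= #|nbhd e F :\: F|%:R.
Proof.
move=> expAB A_ge2 F_le; have expBA := two_sided_expanderC expAB.
have [eps01 bipAB cardAB _ _] := expAB; have [_ AB0 ABT _] := bipAB.
set FA := F :&: A; set FB := F :&: B.
have cardF : #|F| = (#|FA| + #|FB|)%N.
  by rewrite -cardsUI -setIUr ABT setIT setIACA setIid AB0 setI0 cards0 addn0.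
have sNA : nbhd e FA \subset B := nbhd_subset_B bipAB (subsetIr F A).
have sNB : nbhd e FB \subset A := nbhd_subset_B (bipartite_withC bipAB) (subsetIr F B).
set D1 := nbhd e FA :\: FB; set D2 := nbhd e FB :\: FA.
have sD12 : D1 :|: D2 \subset nbhd e F :\: F.
  apply/subsetP => y /setUP[] /setDP[yN yF']; rewrite in_setD.
  - rewrite (subsetP (nbhdS e (subsetIl F A)) y yN) andbT.
    by apply: contra yF' => yF; rewrite inE yF (subsetP sNA y yN).
  - rewrite (subsetP (nbhdS e (subsetIl F B)) y yN) andbT.
    by apply: contra yF' => yF; rewrite inE yF (subsetP sNB y yN).
have D12 : D1 :&: D2 = set0.
  apply/setP => y; rewrite in_setI in_set0; apply/negP => /andP[/setDP[y1 _] /setDP[y2 _]].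
  by have := subsetP sNA y y1; rewrite (in_bipartite_B bipAB) (subsetP sNB y y2).
have cardD : (#|D1| + #|D2| <= #|nbhd e F :\: F|)%N.
  by rewrite -cardsUI D12 cards0 addn0 subset_leq_card.
have cardD1 : (#|nbhd e FA| <= #|D1| + #|FB|)%N.
  rewrite cardsD; have := subset_leq_card (subsetIr (nbhd e FA) FB).
  by have := subset_leq_card (subsetIl (nbhd e FA) FB); lia.
have cardD2 : (#|nbhd e FB| <= #|D2| + #|FA|)%N.
  rewrite cardsD; have := subset_leq_card (subsetIr (nbhd e FB) FA).
  by have := subset_leq_card (subsetIl (nbhd e FB) FA); lia.
rewrite cardF natrD; apply: (@le_trans _ _ (#|D1|%:R + #|D2|%:R)); last first.
  by rewrite -natrD ler_nat.
apply: (expansion_bound_two_sides (n := #|A|%:R) (NA := #|nbhd e FA|%:R)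
  (NB := #|nbhd e FB|%:R)) => //.
- by rewrite ler0n ler_nat subset_leq_card ?subsetIr.
- by rewrite ler0n ler_nat cardAB subset_leq_card ?subsetIr.
- by rewrite -natrD -cardF -!natrM ler_nat.
- exact: expander_side_bound expAB A_ge2 (subsetIr F A).
- rewrite cardAB; apply: expander_side_bound expBA _ (subsetIr F B).
  by rewrite -cardAB.
- by rewrite lerBlDr -natrD ler_nat.
- by rewrite lerBlDr -natrD ler_nat.
Qed.

End Expansion.

Section BlowUp.

Local Open Scope ring_scope.

Variables (V : finType) (kv : V -> nat).
Variables (W : finType) (e' : rel W) (X Y : {set W}) (C : V -> seq W).

Hypothesis bipXY : bipartite_with e' X Y.
Hypothesis cycle_C : forall v, is_cycle_in e' (C v).
Hypothesis disjoint_C : forall v w, v != w -> [disjoint C v & C w].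
Hypothesis size_C : forall v, size (C v) = (2 * kv v)%N.
Hypothesis cover_C : forall x, exists v, x \in C v.

Lemma card_partition_cycles (Z : {set W}) :
  #|Z| = (\sum_v #|[set x in Z | x \in C v]|)%N.
Proof.
pose f x := xchoose (cover_C x).
have memC x v : (x \in C v) = (f x == v).
  apply/idP/eqP => [xv | <-]; last exact: (xchooseP (cover_C x)).
  apply/eqP; apply: contraT => neq.
  by have := disjointFr (disjoint_C neq) (xchooseP (cover_C x)); rewrite xv.
rewrite -sum1_card (partition_big f predT) //=; apply: eq_bigr => v _.
by rewrite -sum1_card; apply: eq_bigl => x; rewrite inE memC.
Qed.

Lemma card_cycle_X v : #|[set x in X | x \in C v]| = kv v.
Proof.
have [uniq_c _ cycle_c] := cycle_C v.
by have := card_cycle_side bipXY uniq_c cycle_c; rewrite size_C; lia.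
Qed.

Lemma card_X : #|X| = (\sum_v kv v)%N.
Proof. by rewrite card_partition_cycles; apply: eq_bigr => v _; exact: card_cycle_X. Qed.

Variables (R : realType) (eps : R) (k : nat) (e : rel V) (A B : {set V}).

Hypotheses (expAB : two_sided_expander eps e A B) (A_ge2 : (2 <= #|A|)%N).
Hypothesis k_gt0 : (0 < k)%N.
Hypothesis kv_bounds : forall v, (k <= kv v)%N /\ (kv v)%:R <= (1 + eps / 4) * k%:R.
Hypothesis link_XY : forall v w, e v w ->
  exists x y, [/\ e' x y, x \in C v, x \in X, y \in C w & y \in Y].

Lemma card_vertices : #|V| = (2 * #|A|)%N.
Proof.
have [_ [_ AB0 ABT _] cardAB _ _] := expAB.
by rewrite -cardsT -ABT cardsU AB0 cards0 subn0 -cardAB; lia.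
Qed.

Variable S : {set W}.
Hypothesis sSX : S \subset X.

Definition part v := [set x in S | x \in C v].
Definition full_cycles := [set v | #|part v| == kv v].
Definition partial_cycles := [set v | 0 < #|part v| < kv v]%N.
Definition gain_cycles := partial_cycles :|: (nbhd e full_cycles :\: full_cycles).

Lemma part_subset v : part v \subset [set x in X | x \in C v].
Proof. by apply/subsetP => x; rewrite !inE => /andP[/(subsetP sSX) -> ->]. Qed.

Lemma card_part_le v : (#|part v| <= kv v)%N.
Proof. by rewrite -card_cycle_X subset_leq_card ?part_subset. Qed.

Lemma full_cycle_subset v : v \in full_cycles -> [set x in X | x \in C v] \subset S.
Proof.
rewrite inE => /eqP full_v.
have /eqP <- : part v == [set x in X | x \in C v].
  by rewrite eqEcard part_subset card_cycle_X full_v leqnn.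
by apply/subsetP => x; rewrite inE => /andP[].
Qed.

Lemma nbhd_part_gain v :
  (#|part v| + (v \in gain_cycles) <= #|[set y in nbhd e' S | y \in C v]|)%N.
Proof.
have [uniq_c _ cycle_c] := cycle_C v.
have sNpart : [set y in nbhd e' (part v) | y \in C v] \subset [set y in nbhd e' S | y \in C v].
  apply/subsetP => y /setIdP[yN yv]; apply/setIdP; split => //.
  by apply: (subsetP (nbhdS e' _)) yN; apply/subsetP => x /setIdP[].
have part_c : part v \subset C v by apply/subsetP => x; rewrite inE => /andP[].
have [gain_v | _] := boolP (v \in gain_cycles); last first.
  by rewrite addn0; apply: leq_trans (subset_leq_card sNpart); exact: cycle_nbhd_ge.
rewrite addn1; have [partial_v | not_partial] := boolP (v \in partial_cycles).
  move: partial_v; rewrite inE => /andP[part_gt0 part_lt].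
  apply: leq_trans (subset_leq_card sNpart); apply: (cycle_nbhd_gt bipXY uniq_c cycle_c).
  - exact: part_subset.
  - by rewrite -card_gt0.
  - by rewrite card_cycle_X.
move: gain_v; rewrite in_setU (negbTE not_partial) => /setDP[/nbhdP[w full_w ewv] not_full].
have -> : #|part v| = 0%N.
  by move: not_full not_partial; rewrite !inE; have := card_part_le v; lia.
have [x [y [exy xw xX yv yY]]] := link_XY ewv.
apply/card_gt0P; exists y; rewrite inE yv andbT; apply/nbhdP; exists x => //.
by apply: (subsetP (full_cycle_subset full_w)); rewrite inE xX.
Qed.

Lemma card_nbhd_ge_gain : (#|S| + #|gain_cycles| <= #|nbhd e' S|)%N.
Proof.
have cardE (D : {set V}) : #|D| = (\sum_v (v \in D : nat))%N.
  by rewrite -sum1_card big_mkcond; apply: eq_bigr => v _; case: (v \in D).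
rewrite (card_partition_cycles S) (card_partition_cycles (nbhd e' S)) cardE -big_split.
by apply: leq_sum => v _; exact: nbhd_part_gain.
Qed.

Lemma card_full_cycles_le : (k * #|full_cycles| <= #|S|)%N.
Proof.
rewrite (card_partition_cycles S) mulnC -sum_nat_const.
rewrite [X in (_ <= X)%N](bigID (mem full_cycles)) /=; apply: leq_trans (leq_addr _ _).
by apply: leq_sum => v; rewrite inE => /eqP ->; have [] := kv_bounds v.
Qed.

Lemma card_S_le_full_partial :
  #|S|%:R <= (1 + eps / 4) * k%:R * (#|full_cycles| + #|partial_cycles|)%N%:R.
Proof.
pose T := full_cycles :|: partial_cycles.
have cardS : (#|S| <= \sum_(v in T) kv v)%N.
  rewrite (card_partition_cycles S) (bigID (mem T)) /= [X in (_ + X)%N]big1 ?addn0.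
    by apply: leq_sum => v _; exact: card_part_le.
  move=> v; rewrite !inE negb_or => /andP[not_full not_partial].
  by change (#|part v| = 0%N); move: not_full not_partial; have := card_part_le v; lia.
have eps_ge0 : 0 <= eps by have [/andP[/ltW]] := expAB.
apply: le_trans (_ : (\sum_(v in T) kv v)%N%:R <= _); first by rewrite ler_nat.
rewrite natr_sum; apply: le_trans (_ : \sum_(v in T) (1 + eps / 4) * k%:R <= _).
  by apply: ler_sum => v _; have [] := kv_bounds v.
rewrite sumr_const -[_ *+ #|T|]mulr_natr; apply: ler_wpM2l.
  by rewrite mulr_ge0 // addr_ge0 // divr_ge0.
by rewrite ler_nat cardsU; lia.
Qed.

Lemma card_full_cycles_small : (2 * #|S| <= #|X|)%N -> (4 * #|full_cycles| <= 5 * #|A|)%N.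
Proof.
move=> S_half; have [/andP[eps_gt0 eps_le1] _ _ _ _] := expAB.
have cardX : #|X|%:R <= (2 * #|A|)%N%:R * ((1 + eps / 4) * k%:R) :> R.
  rewrite card_X natr_sum -card_vertices.
  apply: le_trans (_ : \sum_(v : V) (1 + eps / 4) * k%:R <= _).
    by apply: ler_sum => v _; have [] := kv_bounds v.
  by rewrite sumr_const -[X in X <= _]mulr_natl.
have kF : k%:R * #|full_cycles|%:R <= #|S|%:R :> R by rewrite -natrM ler_nat card_full_cycles_le.
have SX : 2 * #|S|%:R <= #|X|%:R :> R by rewrite -natrM ler_nat.
have k_pos : 0 < k%:R :> R by rewrite ltr0n.
have slack : 0 <= #|A|%:R * k%:R * (1 - eps) :> R.
  by rewrite mulr_ge0 ?subr_ge0 // mulr_ge0 // ltW.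
rewrite natrM in cardX; rewrite -(ler_nat R) !natrM leNgt; apply/negP => F_large.
have : 0 < k%:R * (4 * #|full_cycles|%:R - 5 * #|A|%:R) :> R.
  by rewrite mulr_gt0 // subr_gt0.
nra.
Qed.

Lemma blowup_expansion :
  (2 * #|S| <= #|X|)%N -> (1 + eps / (32 * k%:R)) * #|S|%:R <= #|nbhd e' S|%:R.
Proof.
move=> S_half; have [/andP[eps_gt0 eps_le1] _ _ _ _] := expAB.
have k_pos : 0 < k%:R :> R by rewrite ltr0n.
have gain_full : eps / 8 * #|full_cycles|%:R <= #|gain_cycles|%:R.
  apply: le_trans (expander_gain expAB A_ge2 (card_full_cycles_small S_half)) _.
  by rewrite ler_nat subset_leq_card // subsetUr.
have gain_partial : #|partial_cycles|%:R <= #|gain_cycles|%:R :> R.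
  by rewrite ler_nat subset_leq_card // subsetUl.
have S_le : #|S|%:R <= 2 * k%:R * (#|full_cycles| + #|partial_cycles|)%N%:R :> R.
  by apply: le_trans card_S_le_full_partial _; apply: ler_wpM2r => //; nra.
apply: le_trans (_ : #|S|%:R + #|gain_cycles|%:R <= _); last first.
  by rewrite -natrD ler_nat card_nbhd_ge_gain.
rewrite mulrDl mul1r lerD2l.
have scale : eps / (32 * k%:R) * (2 * k%:R) = eps / 16 by field; rewrite gt_eqF.
have eps'_ge0 : 0 <= eps / (32 * k%:R) by rewrite divr_ge0 ?mulr_ge0 // ltW.
have gain_ge0 : 0 <= #|gain_cycles|%:R :> R by [].
have eps_partial : eps * #|partial_cycles|%:R <= #|partial_cycles|%:R by rewrite ler_piMl.
by have := ler_wpM2l eps'_ge0 S_le; rewrite mulrA scale natrD; lra.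
Qed.

End BlowUp.

Local Open Scope ring_scope.

Theorem lemma9 (R : realType) (eps : R) (k Delta : nat) :
  0 < eps -> eps <= 1 -> (2 <= k)%N ->
  exists eps' : R, 0 < eps' /\
  forall (V : finType) (e : rel V) (A B : {set V}),
    two_sided_expander eps e A B ->
    max_deg e = Delta ->
    (3 <= #|A|)%N ->
  forall (kv : V -> nat),
    (forall v, (k <= kv v)%N /\ (kv v)%:R <= (1 + eps / 4) * k%:R) ->
  forall (W : finType) (e' : rel W) (X Y : {set W}) (C : V -> seq W),
    bipartite_with e' X Y ->
    (* (i) pairwise disjoint cycles C_v of G' *)
    (forall v, is_cycle_in e' (C v)) ->
    (forall v w, v != w -> [disjoint C v & C w]) ->
    (* (ii) |C_v| = 2 k_v *)
    (forall v, size (C v) = (2 * kv v)%N) ->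
    (* (iii) V(G') is the union of the V(C_v) *)
    (forall x : W, exists v, x \in C v) ->
    (* (iv) *)
    (forall v w, e v w ->
       exists x y p q,
         [/\ e' x y, e' p q,
             [/\ x \in C v, x \in X, y \in C w & y \in Y] &
             [/\ p \in C v, p \in Y, q \in C w & q \in X]]) ->
    two_sided_expander eps' e' X Y.
Proof.
move=> eps_gt0 eps_le1 k_ge2; have k_gt0 : (0 < k)%N by lia.
have k_ge1 : 1 <= k%:R :> R by rewrite ler1n.
(* eps / (32 k) does not depend on the maximum degree. *)
exists (eps / (32 * k%:R)); split; first by rewrite divr_gt0 ?mulr_gt0 // ltr0n.
move=> V e A B expAB _ A_ge3 kv kv_bounds W e' X Y C bipXY cycle_C disjoint_C
  size_C cover_C link.
have A_ge2 : (2 <= #|A|)%N by lia.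
have link_XY v w : e v w -> exists x y, [/\ e' x y, x \in C v, x \in X, y \in C w & y \in Y].
  by case/link => x [y [p [q [exy _ [] *]]]]; exists x, y.
have link_YX v w : e v w -> exists x y, [/\ e' x y, x \in C v, x \in Y, y \in C w & y \in X].
  by case/link => x [y [p [q [_ epq _ [] *]]]]; exists p, q.
have bipYX := bipartite_withC bipXY.
split => //.
- by rewrite divr_gt0 ?mulr_gt0 ?ltr0n //= ler_pdivrMr ?mulr_gt0 ?ltr0n // mul1r; lra.
- by rewrite (card_X bipXY cycle_C disjoint_C size_C cover_C)
     (card_X bipYX cycle_C disjoint_C size_C cover_C).
- move=> S sSX; apply: (blowup_expansion bipXY cycle_C disjoint_C size_C cover_C expAB)
    => //.
- move=> S sSY; apply: (blowup_expansion bipYX cycle_C disjoint_C size_C cover_C expAB)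
    => //.
Qed.
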